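(* Let $\mathbb{C}$ be a small category and $N\mathbb{C}$ its nerve. Then $N\mathbb{C}$ is a Skvortsov–Shehtman complex if and only if it is a Kan complex.
   Context: A simplicial set $S$ is a Skvortsov–Shehtman complex if for all $n>1$, $0\le p<q\le n$, and any $(n-1)$-simplices $c_p,c_q$ of $S$ with $d_pc_q=d_{q-1}c_p$, there exists an $n$-simplex $x$ with $d_px=c_p$ and $d_qx=c_q$. *)

From mathcomp Require Import all_boot.
Set Implicit Arguments. Unset Strict Implicit. Unset Printing Implicit Defensive.

Record Category := {
  Ob : Type;
  Hom : Ob -> Ob -> Type;
  idm : forall a, Hom a a;
  comp : forall a b c, Hom b c -> Hom a b -> Hom a c;
  comp_id_l : forall a b (f : Hom a b), comp (idm b) f = f;
  comp_id_r : forall a b (f : Hom a b), comp f (idm a) = f;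
  comp_assoc : forall a b c d (h : Hom c d) (g : Hom b c) (f : Hom a b),
      comp h (comp g f) = comp (comp h g) f }.
Arguments idm {_} _.
Arguments comp {_ _ _ _} _ _.

(** * Face structure of a simplicial set: [simp n] are the n-simplices and
    [face n i : simp n.+1 -> simp n] is d_i, for 0 <= i <= n+1.
    Both the Kan and the Skvortsov--Shehtman conditions only involve faces. *)
Record FaceStruct := {
  simp : nat -> Type;
  face : forall n, 'I_n.+2 -> simp n.+1 -> simp n }.
Arguments face {_ _} _ _.

(** Skvortsov--Shehtman complex: for n = m+2 > 1, 0 <= p < q <= n,
    c_p, c_q (n-1)-simplices with d_p c_q = d_{q-1} c_p, there is an
    n-simplex x with d_p x = c_p and d_q x = c_q. *)
Definition SS_complex (X : FaceStruct) : Prop :=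
  forall (m : nat) (p q : 'I_m.+3) (cp cq : simp X m.+1),
    p < q ->
    face (inord p : 'I_m.+2) cq = face (inord q.-1 : 'I_m.+2) cp ->
    exists x : simp X m.+2, face p x = cp /\ face q x = cq.

(** Kan complex: every horn Lambda^n_k -> X (n >= 1, 0 <= k <= n) extends to
    an n-simplex.  A horn is a family (y_i)_{i <> k} of (n-1)-simplices with
    d_i y_j = d_{j-1} y_i for i < j, i,j <> k.  The case n = 1 (horns are single
    vertices, no compatibility) is stated separately. *)
Definition Kan_complex (X : FaceStruct) : Prop :=
  (forall (k : 'I_2) (y : 'I_2 -> simp X 0),
      exists x : simp X 1, forall i : 'I_2, i != k -> face i x = y i) /\
  (forall (m : nat) (k : 'I_m.+3) (y : 'I_m.+3 -> simp X m.+1),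
      (forall i j : 'I_m.+3, i != k -> j != k -> i < j ->
          face (inord i : 'I_m.+2) (y j) = face (inord j.-1 : 'I_m.+2) (y i)) ->
      exists x : simp X m.+2, forall i : 'I_m.+3, i != k -> face i x = y i).

(** * The nerve: n-simplices are functors [n] -> C, [n] = {0 < 1 < ... < n}. *)
Record nerve_simplex (C : Category) (n : nat) := NSimplex {
  nob : 'I_n.+1 -> Ob C;
  nmor : forall i j : 'I_n.+1, i <= j -> Hom (nob i) (nob j);
  nmor_id : forall (i : 'I_n.+1) (h : i <= i), nmor h = idm (nob i);
  nmor_comp : forall (i j k : 'I_n.+1) (hij : i <= j) (hjk : j <= k) (hik : i <= k),
      nmor hik = comp (nmor hjk) (nmor hij) }.
Arguments nmor {_ _} _ {_ _} _.

Lemma lift_mono n (k : 'I_n.+2) (i j : 'I_n.+1) :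
  i <= j -> lift k i <= lift k j.
Proof. by rewrite /= leq_bump2. Qed.

(** d_k : precomposition with the coface map delta_k = lift k : [n] -> [n+1]. *)
Definition nerve_face (C : Category) n (k : 'I_n.+2) (x : nerve_simplex C n.+1)
  : nerve_simplex C n.
Proof.
refine (@NSimplex C n (fun i => nob x (lift k i))
          (fun i j h => nmor x (lift_mono k h)) _ _).
- by move=> i h; apply: nmor_id.
- by move=> i j l hij hjl hil; apply: nmor_comp.
Defined.

Definition Nerve (C : Category) : FaceStruct :=
  {| simp := nerve_simplex C; face := @nerve_face C |}.

(* Both properties say that C is a groupoid.  Filling the outer 2-horn with
   faces (id_a, f), resp. (f, id_b), yields a left, resp. right, inverse of f,
   and both Skvortsov-Shehtman and Kan complexes fill these horns.  Conversely,
   in a groupoid an n-simplex of the nerve is determined by its vertices and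
   the arrows out of one vertex c.  A compatible family of at least two faces
   that all contain c determines these arrows coherently, so it has a filler:
   for a Kan horn take c = k, for a Skvortsov-Shehtman pair (p, q) take any
   third vertex. *)

From mathcomp Require Import all_boot zify.
From Stdlib Require Import ProofIrrelevance FunctionalExtensionality ClassicalEpsilon.
Set Implicit Arguments. Unset Strict Implicit. Unset Printing Implicit Defensive.

Section PackedArrows.
Variable C : Category.

(* Arrows with their endpoints, so that arrows between propositionally equal
   objects can be compared with plain equality. *)
Definition arrow := {ab : Ob C * Ob C & Hom ab.1 ab.2}.

Definition pack (a b : Ob C) (f : Hom a b) : arrow := existT _ (a, b) f.

Section Transport.
Variables (a b a' b' : Ob C) (f : Hom a b) (f' : Hom a' b').
Hypothesis eq_ff' : pack f = pack f'.

Lemma pack_src : a = a'.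
Proof. exact (f_equal (fun u : arrow => (projT1 u).1) eq_ff'). Qed.

Lemma pack_tgt : b = b'.
Proof. exact (f_equal (fun u : arrow => (projT1 u).2) eq_ff'). Qed.
End Transport.

Lemma pack_inj (a b : Ob C) (f f' : Hom a b) : pack f = pack f' -> f = f'.
Proof. exact: inj_pairT2. Qed.

Lemma pack_comp (a b c a' b' c' : Ob C) (f : Hom a b) (g : Hom b c)
    (f' : Hom a' b') (g' : Hom b' c') :
  pack f = pack f' -> pack g = pack g' -> pack (comp g f) = pack (comp g' f').
Proof.
move=> eq_f eq_g; move: (pack_src eq_f) (pack_tgt eq_f) (pack_tgt eq_g) => ea eb ec.
subst a' b' c'; by rewrite (pack_inj eq_f) (pack_inj eq_g).
Qed.

Definition cast (a b a' b' : Ob C) (ea : a = a') (eb : b = b') (f : Hom a b) : Hom a' b' :=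
  match ea, eb with erefl, erefl => f end.

Lemma pack_cast (a b a' b' : Ob C) (ea : a = a') (eb : b = b') (f : Hom a b) :
  pack (cast ea eb f) = pack f.
Proof. by case: a' / ea; case: b' / eb. Qed.

Lemma pack_left_inverse (a b a' b' c' : Ob C) (f : Hom a b) (f' : Hom a' b') (g' : Hom b' c') :
  pack f' = pack f -> pack (comp g' f') = pack (idm a) -> exists g : Hom b a, comp g f = idm a.
Proof.
move=> eq_f; move: (pack_src eq_f) (pack_tgt eq_f) => ea eb; subst a' b'.
rewrite (pack_inj eq_f) => eq_id; move: (pack_tgt eq_id) => ec; subst c'.
by exists g'; apply: pack_inj.
Qed.

Lemma pack_right_inverse (a b a' b' c' : Ob C) (f : Hom a b) (f' : Hom a' b') (g' : Hom c' a') :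
  pack f' = pack f -> pack (comp f' g') = pack (idm b) -> exists g : Hom b a, comp f g = idm b.
Proof.
move=> eq_f; move: (pack_src eq_f) (pack_tgt eq_f) => ea eb; subst a' b'.
rewrite (pack_inj eq_f) => eq_id; move: (pack_src eq_id) => ec; subst c'.
by exists g'; apply: pack_inj.
Qed.

End PackedArrows.

Section NerveSimplices.
Variable C : Category.

Lemma nerve_simplex_ext n (x y : nerve_simplex C n) :
  (forall (i j : 'I_n.+1) (h : i <= j), pack (nmor x h) = pack (nmor y h)) -> x = y.
Proof.
case: x y => [ox mx idx compx] [oy my idy compy] /= eq_mor.
have eq_ob : ox = oy.
  by apply: functional_extensionality => i; exact: pack_src (eq_mor i i (leqnn i)).
subst oy; have eq_m : mx = my.
  do 3!apply: functional_extensionality_dep => ?; exact: pack_inj (eq_mor _ _ _).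
subst my; by rewrite (proof_irrelevance _ idx idy) (proof_irrelevance _ compx compy).
Qed.

Lemma nerve_simplex0_ext (x y : nerve_simplex C 0) : nob x ord0 = nob y ord0 -> x = y.
Proof.
move=> eq_ob; apply: nerve_simplex_ext => i j.
rewrite (ord1 i) (ord1 j) => h; rewrite !nmor_id.
by case: (nob y ord0) / eq_ob.
Qed.

Lemma pack_nmor n (z : nerve_simplex C n) (i j i' j' : 'I_n.+1) (h : i <= j) (h' : i' <= j') :
  i = i' -> j = j' -> pack (nmor z h) = pack (nmor z h').
Proof. by move=> ei ej; subst i' j'; rewrite (bool_irrelevance h h'). Qed.

Lemma pack_nmor_face n (s : 'I_n.+2) (x : nerve_simplex C n.+1) (z : nerve_simplex C n)
    (i j : 'I_n.+1) (i' j' : 'I_n.+2) (h : i <= j) (h' : i' <= j') :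
  nerve_face s x = z -> lift s i = i' -> lift s j = j' -> pack (nmor x h') = pack (nmor z h).
Proof. by move=> <- ei ej; apply: pack_nmor. Qed.

Definition edge_ob (a b : Ob C) (k : nat) : Ob C := if k is 0 then a else b.

Definition edge_mor (a b : Ob C) (f : Hom a b) (i j : nat) :
    i <= j -> Hom (edge_ob a b i) (edge_ob a b j) :=
  match i, j with
  | 0, 0 => fun _ => idm a
  | 0, _.+1 => fun _ => f
  | _.+1, _.+1 => fun _ => idm b
  | _.+1, 0 => fun h => False_rect _ (Bool.diff_false_true h)
  end.

Definition edge (a b : Ob C) (f : Hom a b) : nerve_simplex C 1.
Proof.
refine (@NSimplex C 1 (fun i => edge_ob a b i) (fun i j h => edge_mor f h) _ _).
- by move=> [[|[|k]] ?] h.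
- move=> [[|[|i]] ?] [[|[|j]] ?] [[|[|k]] ?] //= hij hjk hik;
  by rewrite ?comp_id_l ?comp_id_r.
Defined.

Lemma pack_nmor_edge (s : 'I_3) (x : nerve_simplex C 2) (a b : Ob C)
    (f : Hom a b) (i j : 'I_3) (h : i <= j) :
  nerve_face s x = edge f -> lift s ord0 = i -> lift s ord_max = j -> pack (nmor x h) = pack f.
Proof. exact: (@pack_nmor_face 1 s x (edge f) ord0 ord_max i j isT h). Qed.

Lemma nerve_horn1_filler (k : 'I_2) (y : 'I_2 -> nerve_simplex C 0) :
  exists x : nerve_simplex C 1, forall i : 'I_2, i != k -> nerve_face i x = y i.
Proof.
exists (edge (idm (nob (y (lift k ord0)) ord0))) => i.
rewrite eq_sym => /unlift_some [j -> _]; rewrite (ord1 j).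
by apply: nerve_simplex0_ext => /=; case: bump.
Qed.

End NerveSimplices.

Lemma bumpE i k : bump i k = if i <= k then k.+1 else k.
Proof. by rewrite /bump; case: leqP. Qed.

Lemma unbumpE i k : unbump i k = if i < k then k.-1 else k.
Proof. by rewrite /unbump; case: ltnP => _; rewrite ?subn1 ?subn0. Qed.

Ltac solve_bump :=
  rewrite ?bumpE ?unbumpE; repeat case: ifP; lia.

(* The position of the vertex v in the face d_s, for v != s. *)
Definition face_index m (s v : 'I_m.+3) : 'I_m.+2 := inord (unbump s v).

Lemma face_index_lift m (s : 'I_m.+3) (i : 'I_m.+2) : face_index s (lift s i) = i.
Proof. by apply/val_inj; rewrite /face_index /= bumpK inordK. Qed.

Lemma face_index_common m (s t v : 'I_m.+3) : s < t -> v != s -> v != t ->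
  exists u : 'I_m.+1,
    lift (inord s : 'I_m.+2) u = face_index t v /\ lift (inord t.-1 : 'I_m.+2) u = face_index s v.
Proof.
move=> st vs vt; have lt_v := ltn_ord v; have lt_t := ltn_ord t.
exists (inord (unbump s (unbump t v))); split; apply/val_inj;
  rewrite /face_index /= !inordK; move: vs vt st lt_v lt_t; rewrite -!val_eqE /=;
  move: (val v) (val s) (val t) => a b c; solve_bump.
Qed.

Lemma exists_other3 m (p q : 'I_m.+3) : exists c : 'I_m.+3, (c != p) && (c != q).
Proof.
exists (inord (if (0 != p) && (0 != q) then 0 else if (1 != p) && (1 != q) then 1 else 2)).
rewrite -!val_eqE /= inordK; move: (ltn_ord p) (ltn_ord q); move: (val p) (val q) => a b;
  solve_bump.
Qed.

Definition compatible (X : FaceStruct) m (S : pred 'I_m.+3) (y : 'I_m.+3 -> simp X m.+1) : Prop :=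
  forall i j : 'I_m.+3, S i -> S j -> i < j ->
    face (inord i : 'I_m.+2) (y j) = face (inord j.-1 : 'I_m.+2) (y i).

Definition groupoid (C : Category) : Prop :=
  forall (a b : Ob C) (f : Hom a b), exists g : Hom b a, comp g f = idm a /\ comp f g = idm b.

Lemma groupoid_of_inverses (C : Category) :
  (forall (a b : Ob C) (f : Hom a b), exists g : Hom b a, comp g f = idm a) ->
  (forall (a b : Ob C) (f : Hom a b), exists g : Hom b a, comp f g = idm b) ->
  groupoid C.
Proof.
move=> left_inv right_inv a b f.
have [g gf] := left_inv a b f; have [g' fg'] := right_inv a b f.
have eq_g : g = g' by rewrite -[g]comp_id_r -fg' comp_assoc gf comp_id_l.
by exists g; split; rewrite // eq_g.
Qed.

Lemma groupoid_inv (C : Category) : groupoid C ->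
  exists inv : forall a b : Ob C, Hom a b -> Hom b a,
    (forall a b (f : Hom a b), comp (inv a b f) f = idm a) /\
    (forall a b (f : Hom a b), comp f (inv a b f) = idm b).
Proof.
move=> G; exists (fun a b f => proj1_sig (constructive_indefinite_description _ (G a b f))).
by split=> a b f; case: constructive_indefinite_description => g [].
Qed.

Section GroupoidNerve.
Variable C : Category.
Variable inv : forall a b : Ob C, Hom a b -> Hom b a.
Arguments inv {a b}.
Hypothesis comp_invl : forall a b (f : Hom a b), comp (inv f) f = idm a.
Hypothesis comp_invr : forall a b (f : Hom a b), comp f (inv f) = idm b.

Lemma inv_unique (a b : Ob C) (f : Hom a b) (g : Hom b a) : comp g f = idm a -> inv f = g.
Proof. by move=> gf; rewrite -[inv f]comp_id_l -gf -comp_assoc comp_invr comp_id_r. Qed.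

Lemma pack_inv (a b a' b' : Ob C) (f : Hom a b) (f' : Hom a' b') :
  pack f = pack f' -> pack (inv f) = pack (inv f').
Proof.
move=> eq_f; move: (pack_src eq_f) (pack_tgt eq_f) => ea eb; subst a' b'.
by rewrite (pack_inj eq_f).
Qed.

(* The arrow from vertex i to vertex j of z, through vertex 0; for i > j it is
   the inverse of the arrow of z from j to i. *)
Definition arr n (z : nerve_simplex C n) (i j : 'I_n.+1) : Hom (nob z i) (nob z j) :=
  comp (nmor z (leq0n j : ord0 <= j)) (inv (nmor z (leq0n i : ord0 <= i))).

Lemma arr_comp n (z : nerve_simplex C n) (i j k : 'I_n.+1) :
  comp (arr z j k) (arr z i j) = arr z i k.
Proof. by rewrite /arr -comp_assoc (comp_assoc (inv _)) comp_invl comp_id_l. Qed.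

Lemma arr_nmor n (z : nerve_simplex C n) (i j : 'I_n.+1) (h : i <= j) : arr z i j = nmor z h.
Proof.
rewrite /arr (nmor_comp z (leq0n i : ord0 <= i) h).
by rewrite -comp_assoc comp_invr comp_id_r.
Qed.

Lemma inv_arr n (z : nerve_simplex C n) (i j : 'I_n.+1) : inv (arr z i j) = arr z j i.
Proof. by apply: inv_unique; rewrite arr_comp (arr_nmor z (leqnn i)) nmor_id. Qed.

Lemma arr_face n (s : 'I_n.+2) (w : nerve_simplex C n.+1) (u v : 'I_n.+1) :
  arr (nerve_face s w) u v = arr w (lift s u) (lift s v).
Proof.
rewrite -(arr_comp w _ (lift s ord0)) -(inv_arr w (lift s ord0)).
by rewrite (arr_nmor w (lift_mono s (leq0n u : ord0 <= u)))
           (arr_nmor w (lift_mono s (leq0n v : ord0 <= v))).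
Qed.

Definition cone n (o : 'I_n.+1 -> Ob C) (B : Ob C) (g : forall i, Hom B (o i)) :
  nerve_simplex C n.
Proof.
refine (@NSimplex C n o (fun i j _ => comp (g j) (inv (g i))) _ _).
- by move=> i _; rewrite comp_invr.
- by move=> i j k _ _ _; rewrite -comp_assoc (comp_assoc (inv _)) comp_invl comp_id_l.
Defined.

Lemma face_cone n (s : 'I_n.+2) (o : 'I_n.+2 -> Ob C) (B : Ob C) (g : forall i, Hom B (o i))
    (z : nerve_simplex C n) (b : 'I_n.+1) :
  (forall i, pack (g (lift s i)) = pack (arr z b i)) -> nerve_face s (cone g) = z.
Proof.
move=> eq_g; apply: nerve_simplex_ext => i j h /=.
rewrite -(arr_nmor z h) -(arr_comp z i b j) -(inv_arr z b i).
exact: pack_comp (pack_inv (eq_g i)) (eq_g j).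
Qed.

Section PartialHornFiller.
Variables (m : nat) (S : pred 'I_m.+3) (y : 'I_m.+3 -> nerve_simplex C m.+1).
Hypothesis y_compatible : @compatible (Nerve C) m S y.

Lemma pack_arr_coherent (s t v w : 'I_m.+3) :
  S s -> S t -> v != s -> v != t -> w != s -> w != t ->
  pack (arr (y s) (face_index s v) (face_index s w)) =
  pack (arr (y t) (face_index t v) (face_index t w)).
Proof.
wlog st : s t / s < t.
  move=> coherent Ss St vs vt ws wt; case: (ltngtP s t) => [lt|gt|/val_inj eq_st].
  - exact: coherent.
  - exact/esym/coherent.
  - by rewrite eq_st.
move=> Ss St vs vt ws wt.
have [uv [tv sv]] := face_index_common st vs vt.
have [uw [tw sw]] := face_index_common st ws wt.
rewrite -tv -tw -sv -sw -!arr_face.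
exact/esym/(f_equal (fun z : nerve_simplex C m => pack (arr z uv uw)) (y_compatible Ss St st)).
Qed.

Lemma nob_coherent (s t v : 'I_m.+3) : S s -> S t -> v != s -> v != t ->
  nob (y s) (face_index s v) = nob (y t) (face_index t v).
Proof. by move=> Ss St vs vt; apply: pack_src (pack_arr_coherent Ss St vs vt vs vt). Qed.

Variables p q c : 'I_m.+3.
Hypotheses (Sp : S p) (Sq : S q) (neq_pq : p != q) (notSc : ~~ S c).

(* A face of the horn containing the vertex v. *)
Let cover (v : 'I_m.+3) : 'I_m.+3 := if v == p then q else p.

Let S_cover v : S (cover v).
Proof. by rewrite /cover; case: ifP. Qed.

Let neq_cover v : v != cover v.
Proof. by rewrite /cover; case: (eqVneq v p) => [->|]. Qed.

Let neq_c s : S s -> c != s.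
Proof. by apply: contraTneq => <-. Qed.

Let vertex_ob v := nob (y (cover v)) (face_index (cover v) v).

Let base_arrow v : Hom (vertex_ob c) (vertex_ob v) :=
  cast (nob_coherent (S_cover v) (S_cover c) (neq_c (S_cover v)) (neq_c (S_cover c))) erefl
       (arr (y (cover v)) (face_index (cover v) c) (face_index (cover v) v)).

Let pack_base_arrow s v : S s -> v != s ->
  pack (base_arrow v) = pack (arr (y s) (face_index s c) (face_index s v)).
Proof.
move=> Ss vs; rewrite pack_cast.
exact: pack_arr_coherent (S_cover v) Ss (neq_c _) (neq_c Ss) (neq_cover v) vs.
Qed.

Lemma partial_horn_filler : exists x : nerve_simplex C m.+2, forall s, S s -> nerve_face s x = y s.
Proof.
exists (cone base_arrow) => s Ss.
apply: (face_cone (b := face_index s c)) => i.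
by rewrite (pack_base_arrow Ss) ?face_index_lift // eq_sym neq_lift.
Qed.

End PartialHornFiller.

End GroupoidNerve.

Lemma groupoid_Kan (C : Category) : groupoid C -> Kan_complex (Nerve C).
Proof.
case/groupoid_inv => inv [invl invr]; split; first exact: nerve_horn1_filler.
move=> m k y y_compatible.
have [p /andP [pk _]] := exists_other3 k k.
have [q /andP [qk qp]] := exists_other3 k p.
apply: (partial_horn_filler invl invr (S := fun i => i != k) y_compatible pk qk).
- by rewrite eq_sym.
- by rewrite negbK.
Qed.

Lemma groupoid_SS (C : Category) : groupoid C -> SS_complex (Nerve C).
Proof.
case/groupoid_inv => inv [invl invr] m p q cp cq lt_pq compat_pq.
have [c /andP [cp' cq']] := exists_other3 p q.
have neq_pq : p != q := negbT (ltn_eqF lt_pq).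
have neq_qp : q != p by rewrite eq_sym.
pose S i := (i == p) || (i == q).
pose y i := if i == p then cp else cq.
have y_compatible : @compatible (Nerve C) m S y.
  move=> i j /orP [] /eqP -> /orP [] /eqP -> //; rewrite ?ltnn //.
  - by rewrite /y eqxx (negbTE neq_qp).
  - by move/(ltn_trans lt_pq); rewrite ltnn.
have Sp : S p by rewrite /S eqxx.
have Sq : S q by rewrite /S eqxx orbT.
have notSc : ~~ S c by rewrite /S negb_or cp' cq'.
have [x fill] := partial_horn_filler invl invr y_compatible Sp Sq neq_pq notSc.
exists x; split.
- by have := fill p Sp; rewrite /y eqxx.
- by have := fill q Sq; rewrite /y (negbTE neq_qp).
Qed.

Definition outer_horn0_fillers (X : FaceStruct) : Prop :=
  forall c1 c2 : simp X 1, face (ord_max : 'I_2) c2 = face (ord_max : 'I_2) c1 ->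
  exists x : simp X 2, face (inord 1 : 'I_3) x = c1 /\ face (ord_max : 'I_3) x = c2.

Definition outer_horn2_fillers (X : FaceStruct) : Prop :=
  forall c0 c1 : simp X 1, face (ord0 : 'I_2) c1 = face (ord0 : 'I_2) c0 ->
  exists x : simp X 2, face (ord0 : 'I_3) x = c0 /\ face (inord 1 : 'I_3) x = c1.

Lemma SS_outer_horn0 (X : FaceStruct) : SS_complex X -> outer_horn0_fillers X.
Proof.
move=> SS c1 c2 compat; apply: (SS 0 (inord 1) ord_max); first by rewrite inordK.
have -> : (inord (inord 1 : 'I_3) : 'I_2) = ord_max by apply/val_inj; rewrite /= !inordK.
by have -> : (inord (ord_max : 'I_3).-1 : 'I_2) = ord_max by apply/val_inj; rewrite /= ?inordK.
Qed.

Lemma SS_outer_horn2 (X : FaceStruct) : SS_complex X -> outer_horn2_fillers X.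
Proof.
move=> SS c0 c1 compat; apply: (SS 0 ord0 (inord 1)); first by rewrite inordK.
have -> : (inord (ord0 : 'I_3) : 'I_2) = ord0 by apply/val_inj; rewrite /= ?inordK.
by have -> : (inord (inord 1 : 'I_3).-1 : 'I_2) = ord0 by apply/val_inj; rewrite /= !inordK.
Qed.

Lemma Kan_outer_horn0 (X : FaceStruct) : Kan_complex X -> outer_horn0_fillers X.
Proof.
move=> [_ Kan] c1 c2 compat.
have [|x fill] := Kan 0 ord0 (fun i => if i == inord 1 then c1 else c2).
  move=> [[|[|[|//]]] ?] [[|[|[|//]]] ?] //= _ _ _.
  rewrite -!val_eqE /= !inordK //=.
  by have -> : (inord 1 : 'I_2) = ord_max by apply/val_inj; rewrite /= ?inordK.
exists x; split.
- by rewrite fill ?eqxx // -(inj_eq (@ord_inj _)) inordK.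
- by rewrite fill // -(inj_eq (@ord_inj _)) inordK.
Qed.

Lemma Kan_outer_horn2 (X : FaceStruct) : Kan_complex X -> outer_horn2_fillers X.
Proof.
move=> [_ Kan] c0 c1 compat.
have [|x fill] := Kan 0 ord_max (fun i => if i == ord0 then c0 else c1).
  move=> [[|[|[|//]]] ?] [[|[|[|//]]] ?] //= _ _ _.
  by have -> : (inord 0 : 'I_2) = ord0 by apply/val_inj; rewrite /= ?inordK.
exists x; split.
- by rewrite fill.
- by rewrite fill // -(inj_eq (@ord_inj _)) inordK.
Qed.

Section InversesFromHorns.
Variable C : Category.

Let h01 : (ord0 : 'I_3) <= (inord 1 : 'I_3). Proof. by rewrite inordK. Qed.
Let h12 : (inord 1 : 'I_3) <= (ord_max : 'I_3). Proof. by rewrite inordK. Qed.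
Let h02 : (ord0 : 'I_3) <= (ord_max : 'I_3). Proof. by []. Qed.

Lemma nerve_left_inverse : outer_horn0_fillers (Nerve C) ->
  forall (a b : Ob C) (f : Hom a b), exists g : Hom b a, comp g f = idm a.
Proof.
move=> fill a b f.
have [|x [d1x d2x]] := fill (edge (idm a)) (edge f); first exact: nerve_simplex0_ext.
apply: (pack_left_inverse (f' := nmor x h01) (g' := nmor x h12)).
  by apply: pack_nmor_edge d2x _ _; apply/val_inj; rewrite /= ?inordK.
rewrite -(nmor_comp x h01 h12 h02).
by apply: pack_nmor_edge d1x _ _; apply/val_inj; rewrite /= ?inordK.
Qed.

Lemma nerve_right_inverse : outer_horn2_fillers (Nerve C) ->
  forall (a b : Ob C) (f : Hom a b), exists g : Hom b a, comp f g = idm b.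
Proof.
move=> fill a b f.
have [|x [d0x d1x]] := fill (edge f) (edge (idm b)); first exact: nerve_simplex0_ext.
apply: (pack_right_inverse (f' := nmor x h12) (g' := nmor x h01)).
  by apply: pack_nmor_edge d0x _ _; apply/val_inj; rewrite /= ?inordK.
rewrite -(nmor_comp x h01 h12 h02).
by apply: pack_nmor_edge d1x _ _; apply/val_inj; rewrite /= ?inordK.
Qed.

End InversesFromHorns.

Theorem mainTheorem5 (C : Category) :
  SS_complex (Nerve C) <-> Kan_complex (Nerve C).
Proof.
split=> [SS | Kan].
- apply: groupoid_Kan; apply: groupoid_of_inverses.
  + exact/nerve_left_inverse/SS_outer_horn0.
  + exact/nerve_right_inverse/SS_outer_horn2.
- apply: groupoid_SS; apply: groupoid_of_inverses.
  + exact/nerve_left_inverse/Kan_outer_horn0.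
  + exact/nerve_right_inverse/Kan_outer_horn2.
Qed.
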